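(* Let $Y\in\mathbb{R}^n$ satisfy $Y=X\beta+\sigma\xi$, where $X\in\mathbb{R}^{n\times p}$ is a deterministic matrix with columns $X_1,\dots,X_p$, $\beta\in\mathbb{R}^p$, $\sigma>0$ and $\xi\sim\mathcal{N}(0,\mathbb{I}_n)$. Let $q\ge1$ and let $\pi=\pi_1\otimes\cdots\otimes\pi_p$ be a prior on $\beta$ with independent components, $\pi_j$ being the law of $\beta_j$. Then $$\inf_{\hat T}\mathbb{E}_\pi\mathbf{E}_\beta\sum_{j=1}^p|\hat T_j(X,Y)-\beta_j|^q\ \ge\ \sum_{j=1}^p\inf_{\hat T_j}\mathbb{E}_{\pi_j}\mathbf{E}_{\beta_j}|\hat T_j(X_j,\tilde Y_j)-\beta_j|^q,$$ where $\tilde Y_j=Y-\sum_{i\ne j}X_i\beta_i=\beta_jX_j+\sigma\xi$, the infimum on the left is over all $\mathbb{R}^p$-valued measurable functions $\hat T=(\hat T_1,\dots,\hat T_p)$ of $(X,Y)$, and each infimum on the right is over all real-valued measurable functions $\hat T_j$ of $(X_j,\tilde Y_j)$.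
   Context: $\mathbf{E}_\beta$ denotes expectation over $\xi$ for fixed $\beta$; $\mathbb{E}_\pi$ denotes expectation over $\beta\sim\pi$ (resp. $\mathbb{E}_{\pi_j}$ over $\beta_j\sim\pi_j$). *)

From HB Require Import structures.
From mathcomp Require Import all_boot all_order all_algebra.
From mathcomp Require Import all_classical all_reals all_analysis.

Set Implicit Arguments.
Unset Strict Implicit.
Unset Printing Implicit Defensive.

Import Order.TTheory GRing.Theory Num.Theory.
Local Open Scope classical_set_scope.
Local Open Scope ring_scope.

(* On the product sigma-algebra this determines [P] uniquely. *)
Definition is_product_prob {R : realType} (n : nat)
    (P : probability (n.-tuple (measurableTypeR R)) R) (Q : 'I_n -> probability (measurableTypeR R) R) : Prop :=
  forall B : 'I_n -> set (measurableTypeR R), (forall i, measurable (B i)) ->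
    P [set x | forall i, B i (tnth x i)] = (\prod_(i < n) Q i (B i))%E.

Definition std_gaussian {R : realType} (n : nat)
    (G : probability (n.-tuple (measurableTypeR R)) R) : Prop :=
  is_product_prob G (fun _ => (normal_prob (0 : R) 1 : probability (measurableTypeR R) R)).

Definition lin_model {R : realType} (n p : nat) (X : 'M[R]_(n, p))
    (beta : p.-tuple R) (sigma : R) (xi : n.-tuple R) : n.-tuple R :=
  [tuple \sum_(k < p) X i k * tnth beta k + sigma * tnth xi i | i < n].

Definition single_model {R : realType} (n p : nat) (X : 'M[R]_(n, p))
    (j : 'I_p) (bj : R) (sigma : R) (xi : n.-tuple R) : n.-tuple R :=
  [tuple bj * X i j + sigma * tnth xi i | i < n].

(* E_pi E_beta sum_j |T_j(X,Y) - beta_j|^q  (X is fixed, so T is a function of Y) *)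
Definition bayes_risk {R : realType} (n p : nat) (X : 'M[R]_(n, p)) (sigma q : R)
    (G : probability (n.-tuple (measurableTypeR R)) R) (Pi : probability (p.-tuple (measurableTypeR R)) R)
    (T : n.-tuple (measurableTypeR R) -> p.-tuple (measurableTypeR R)) : \bar R :=
  (\int[Pi]_b \int[G]_xi
     (\sum_(j < p) `|tnth (T (lin_model X b sigma xi)) j - tnth b j| `^ q)%:E)%E.

Definition bayes_risk1 {R : realType} (n p : nat) (X : 'M[R]_(n, p)) (sigma q : R)
    (G : probability (n.-tuple (measurableTypeR R)) R) (j : 'I_p) (Pij : probability (measurableTypeR R) R)
    (Tj : n.-tuple (measurableTypeR R) -> measurableTypeR R) : \bar R :=
  (\int[Pij]_bj \int[G]_xi
     (`|Tj (single_model X j bj sigma xi) - bj| `^ q)%:E)%E.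

Definition minimax_bayes {R : realType} (n p : nat) (X : 'M[R]_(n, p)) (sigma q : R)
    (G : probability (n.-tuple (measurableTypeR R)) R) (Pi : probability (p.-tuple (measurableTypeR R)) R) : \bar R :=
  ereal_inf [set bayes_risk X sigma q G Pi T |
             T in [set T : n.-tuple (measurableTypeR R) -> p.-tuple (measurableTypeR R) | measurable_fun setT T]].

Definition minimax_bayes1 {R : realType} (n p : nat) (X : 'M[R]_(n, p)) (sigma q : R)
    (G : probability (n.-tuple (measurableTypeR R)) R) (j : 'I_p) (Pij : probability (measurableTypeR R) R) : \bar R :=
  ereal_inf [set bayes_risk1 X sigma q G j Pij Tj |
             Tj in [set Tj : n.-tuple (measurableTypeR R) -> measurableTypeR R | measurable_fun setT Tj]].

From HB Require Import structures.
From mathcomp Require Import all_boot all_order all_algebra.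
From mathcomp Require Import all_classical all_reals all_analysis.
From mathcomp Require Import measurable_realfun.
Import Order.TTheory GRing.Theory Num.Theory.
Local Open Scope classical_set_scope.
Local Open Scope ring_scope.

(** For any estimator T the risk is the sum over j of the risks of its
  coordinates T_j.  Since the prior is a product, beta has the law of
  b[j := c] with c ~ pi_j independent of b ~ pi.  Once b is fixed, the map
  y |-> T_j (y + sum_{k <> j} X_k b_k) is an estimator of beta_j = c from
  tilde Y_j = c X_j + sigma xi, so its risk is at least the j-th one-dimensional
  Bayes risk; integrating over b bounds the j-th coordinate risk of T. *)

Section tuple_boxes.
Context {d} {T : measurableType d} {n : nat}.

Definition tuple_box (B : 'I_n -> set T) : set (n.-tuple T) :=
  [set x | forall i, B i (tnth x i)].

Definition tuple_boxes : set (set (n.-tuple T)) :=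
  [set tuple_box B | B in [set B | forall i, measurable (B i)]].

Lemma measurable_tuple_box (B : 'I_n -> set T) :
  (forall i, measurable (B i)) -> measurable (tuple_box B).
Proof.
move=> mB.
have -> : tuple_box B = \bigcap_(i in [set: 'I_n]) ((@tnth n T)^~ i @^-1` B i).
  by apply/seteqP; split=> [x Bx i _|x Bx i]; exact: Bx.
apply: fin_bigcap_measurable => [|i _]; first exact: finite_finset.
by rewrite -[X in measurable X]setTI; exact: measurable_tnth.
Qed.

Lemma tuple_boxes_setI_closed : setI_closed tuple_boxes.
Proof.
move=> _ _ [B mB <-] [C mC <-]; exists (fun i => B i `&` C i).
  by move=> i; exact: measurableI.
by apply/seteqP; split=> x /=; [move=> BCx; split=> i; case: (BCx i)|
  move=> [Bx Cx] i; split].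
Qed.

Lemma g_sigma_tuple_boxes : measurable = <<s tuple_boxes >> :> set (set (n.-tuple T)).
Proof.
apply/seteqP; split; last first.
  apply: smallest_sub; first exact: sigma_algebra_measurable.
  by move=> _ [B mB <-]; exact: measurable_tuple_box.
apply: smallest_sub; first exact: smallest_sigma_algebra.
apply: (big_ind (fun S => S `<=` <<s tuple_boxes >>)) => //.
  by move=> S1 S2 S1B S2B A [/S1B|/S2B].
move=> i _ _ [Y mY <-]; apply: sub_gen_smallest.
exists (fun k => if k == i then Y else setT) => [k|].
  by case: eqP.
apply/seteqP; split=> x /=; first by move=> Yx; split=> //; have := Yx i; rewrite eqxx.
by move=> [_ Yx] k; case: eqP => // ->.
Qed.

Lemma tuple_measure_unique {R : realType} (m1 m2 : {measure set (n.-tuple T) -> \bar R}) :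
  (m1 [set: n.-tuple T] < +oo)%E ->
  (forall B, (forall i, measurable (B i)) -> m1 (tuple_box B) = m2 (tuple_box B)) ->
  forall A, measurable A -> m1 A = m2 A.
Proof.
move=> m1T m12; apply: (measure_unique tuple_boxes (fun=> setT)).
- exact: g_sigma_tuple_boxes.
- exact: tuple_boxes_setI_closed.
- by move=> _; exists (fun=> setT) => //; apply/seteqP; split.
- by rewrite bigcup_const.
- by move=> _ [B mB <-]; exact: m12.
- by [].
Qed.

End tuple_boxes.

Section tuple_update.
Context {d} {T : measurableType d} {p : nat} (j : 'I_p).

Definition tuple_update (z : T * p.-tuple T) : p.-tuple T :=
  [tuple if i == j then z.1 else tnth z.2 i | i < p].

Lemma measurable_tuple_update : measurable_fun [set: T * p.-tuple T] tuple_update.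
Proof.
apply/measurable_fun_tnthP => i.
have -> : (@tnth p T)^~ i \o tuple_update = fun z => if i == j then z.1 else tnth z.2 i.
  by apply/funext => z; rewrite /= tnth_mktuple.
case: eqP => _; first exact: measurable_fst.
exact: measurableT_comp (measurable_tnth i) measurable_snd.
Qed.

Lemma preimage_tuple_update_box (B : 'I_p -> set T) :
  tuple_update @^-1` tuple_box B =
  B j `*` tuple_box (fun i => if i == j then setT else B i).
Proof.
apply/seteqP; split=> -[c b] /=.
- move=> Bcb; split; first by have := Bcb j; rewrite tnth_mktuple eqxx.
  move=> i; case: eqP => // /eqP ij.
  by have := Bcb i; rewrite tnth_mktuple (negbTE ij).
- move=> [Bc Bb] i; rewrite tnth_mktuple; case: eqP => [->//|/eqP ij].
  by have := Bb i; rewrite (negbTE ij).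
Qed.

HB.instance Definition _ := isMeasurableFun.Build _ _ _ _ tuple_update measurable_tuple_update.

End tuple_update.

Section product_probability_update.
Context {R : realType} {p : nat}.
Local Notation RR := (measurableTypeR R).
Context {Pi : probability (p.-tuple RR) R} {Pij : 'I_p -> probability RR R}.
Hypothesis Pi_prod : is_product_prob Pi Pij.

Lemma product_prob_update (j : 'I_p) A : measurable A ->
  Pi A = distribution (Pij j \x Pi)%E (tuple_update j) A.
Proof.
apply: tuple_measure_unique => [|B mB].
  by rewrite [X in (X < _)%E]probability_setT ltry.
pose B' i := if i == j then setT else B i.
have mB' i : measurable (B' i) by rewrite /B'; case: eqP.
transitivity ((Pij j \x Pi)%E (B j `*` tuple_box B')); last first.
  by rewrite /B' -preimage_tuple_update_box.
rewrite product_measure1E //; last exact: measurable_tuple_box.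
transitivity (\prod_(i < p) Pij i (B i))%E; first exact: Pi_prod.
transitivity (Pij j (B j) * \prod_(i < p) Pij i (B' i))%E; last first.
  by congr (_ * _)%E; apply/esym; exact: Pi_prod.
rewrite (bigD1 j) //= [in RHS](bigD1 j) //= /B' eqxx probability_setT mul1e.
by congr (_ * _)%E; apply: eq_bigr => i /negbTE ->.
Qed.

Lemma integral_product_prob_update (j : 'I_p) (F : p.-tuple RR -> \bar R) :
  measurable_fun [set: p.-tuple RR] F -> (forall b : p.-tuple RR, 0 <= F b)%E ->
  (\int[Pi]_b F b = \int[Pi]_b \int[Pij j]_c F (tuple_update j (c, b)))%E.
Proof.
move=> mF F0.
rewrite (eq_measure_integral (distribution (Pij j \x Pi)%E (tuple_update j))); last first.
  by move=> A mA _; exact: product_prob_update.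
have mFu : measurable_fun setT (F \o tuple_update j).
  exact: measurableT_comp mF (measurable_tuple_update j).
by rewrite ge0_integral_distribution // (fubini_tonelli2 _ mFu (fun z => F0 _)).
Qed.

End product_probability_update.

Section linear_model.
Context {R : realType} {n p : nat} (X : 'M[R]_(n, p)) (sigma q : R).
Local Notation RR := (measurableTypeR R).

Lemma measurable_lin_model :
  measurable_fun [set: p.-tuple RR * n.-tuple RR] (fun z => lin_model X z.1 sigma z.2).
Proof.
apply/measurable_fun_tnthP => i.
have -> : (@tnth n RR)^~ i \o (fun z => lin_model X z.1 sigma z.2) =
    fun z => \sum_(k < p) X i k * tnth z.1 k + sigma * tnth z.2 i.
  by apply/funext => z; rewrite /= tnth_mktuple.
apply: measurable_funD.
  apply: measurable_sum => k; apply: measurable_funM => //.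
  exact: measurableT_comp (measurable_tnth k) measurable_fst.
apply: measurable_funM => //.
exact: measurableT_comp (measurable_tnth i) measurable_snd.
Qed.

Definition coord_loss (T : n.-tuple RR -> p.-tuple RR) (j : 'I_p)
    (z : p.-tuple RR * n.-tuple RR) : \bar R :=
  (`|tnth (T (lin_model X z.1 sigma z.2)) j - tnth z.1 j| `^ q)%:E.

Lemma measurable_coord_loss {T} j :
  measurable_fun setT T -> measurable_fun setT (coord_loss T j).
Proof.
move=> mT; apply/measurable_EFinP.
apply: measurableT_comp (measurable_powR q) _.
apply: measurableT_comp (@normr_measurable R setT) _.
apply: measurable_funB.
  exact: measurableT_comp (measurable_tnth j) (measurableT_comp mT measurable_lin_model).
exact: measurableT_comp (measurable_tnth j) measurable_fst.
Qed.

Lemma coord_loss_ge0 T j z : (0 <= coord_loss T j z)%E.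
Proof. by rewrite lee_fin powR_ge0. Qed.

Definition oracle_estimator (T : n.-tuple RR -> p.-tuple RR) (j : 'I_p)
    (b : p.-tuple RR) (y : n.-tuple RR) : RR :=
  tnth (T [tuple tnth y i + \sum_(k < p | k != j) X i k * tnth b k | i < n]) j.

Lemma measurable_oracle_estimator T j b :
  measurable_fun setT T -> measurable_fun setT (oracle_estimator T j b).
Proof.
move=> mT; apply: measurableT_comp (measurable_tnth j) _.
apply: measurableT_comp mT _; apply/measurable_fun_tnthP => i.
have -> : (@tnth n RR)^~ i \o
    (fun y => [tuple tnth y i + \sum_(k < p | k != j) X i k * tnth b k | i < n]) =
    fun y => tnth y i + \sum_(k < p | k != j) X i k * tnth b k.
  by apply/funext => y; rewrite /= tnth_mktuple.
by apply: measurable_funD => //; exact: measurable_tnth.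
Qed.

Lemma lin_model_update j c b xi :
  lin_model X (tuple_update j (c, b)) sigma xi =
  [tuple tnth (single_model X j c sigma xi) i
           + \sum_(k < p | k != j) X i k * tnth b k | i < n].
Proof.
apply: eq_from_tnth => i; rewrite !tnth_mktuple (bigD1 j) //= tnth_mktuple eqxx.
rewrite (eq_bigr (fun k => X i k * tnth b k)) => [|k /negbTE kj].
  by rewrite [X i j * c]mulrC addrAC.
by rewrite tnth_mktuple kj.
Qed.

Lemma coord_loss_update T j c b xi :
  coord_loss T j (tuple_update j (c, b), xi) =
  (`|oracle_estimator T j b (single_model X j c sigma xi) - c| `^ q)%:E.
Proof. by rewrite /coord_loss /= lin_model_update tnth_mktuple eqxx. Qed.

End linear_model.

Section bayes_risk.
Context {R : realType} {n p : nat} (X : 'M[R]_(n, p)) (sigma q : R).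
Local Notation RR := (measurableTypeR R).
Variables (G : probability (n.-tuple RR) R) (Pi : probability (p.-tuple RR) R).
Lemma minimax_bayes1_ge0 j (Pij : probability RR R) :
  (0 <= minimax_bayes1 X sigma q G j Pij)%E.
Proof.
apply: le_ereal_inf_tmp => _ [Tj _ <-].
by apply: integral_ge0 => c _; apply: integral_ge0 => xi _; rewrite lee_fin powR_ge0.
Qed.

Variable T : n.-tuple RR -> p.-tuple RR.
Hypothesis mT : measurable_fun setT T.

Definition coord_risk j (b : p.-tuple RR) : \bar R :=
  \int[G]_xi coord_loss X sigma q T j (b, xi).

Lemma measurable_coord_risk j : measurable_fun setT (coord_risk j).
Proof.
exact: (measurable_fun_fubini_tonelli_F (m2 := G) _
  (measurable_coord_loss X sigma q j mT) (coord_loss_ge0 X sigma q T j)).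
Qed.

Lemma coord_risk_ge0 j b : (0 <= coord_risk j b)%E.
Proof. by apply: integral_ge0 => xi _; exact: coord_loss_ge0. Qed.

Lemma bayes_risk_sum :
  bayes_risk X sigma q G Pi T = (\sum_(j < p) \int[Pi]_b coord_risk j b)%E.
Proof.
rewrite /bayes_risk -ge0_integral_sum //; last 2 first.
- exact: measurable_coord_risk.
- by move=> j b _; exact: coord_risk_ge0.
apply: eq_integral => b _; rewrite -ge0_integral_sum //.
- by apply: eq_integral => xi _; rewrite sumEFin.
- by move=> j; exact: measurable_fun_pair2 (measurable_coord_loss X sigma q j mT).
- by move=> j xi _; exact: coord_loss_ge0.
Qed.

Lemma minimax_bayes1_le_coord_risk (Pij : 'I_p -> probability RR R) j :
  is_product_prob Pi Pij ->
  (minimax_bayes1 X sigma q G j (Pij j) <= \int[Pi]_b coord_risk j b)%E.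
Proof.
move=> Pi_prod; set m := minimax_bayes1 _ _ _ _ _ _.
rewrite (integral_product_prob_update Pi_prod j _ (measurable_coord_risk j)); last first.
  exact: coord_risk_ge0.
have -> : m = (\int[Pi]_b cst m b)%E.
  by rewrite integral_cst // [X in (m * X)%E]probability_setT mule1.
apply: ge0_le_integral => //.
- by move=> b _; exact: minimax_bayes1_ge0.
- have mFu : measurable_fun setT (coord_risk j \o tuple_update j).
    exact: measurableT_comp (measurable_coord_risk j) (measurable_tuple_update j).
  exact: (measurable_fun_fubini_tonelli_G (m1 := Pij j) _ mFu (fun z => coord_risk_ge0 j _)).
move=> b _; apply: ereal_inf_lbound.
exists (oracle_estimator X T j b); first exact: measurable_oracle_estimator.
by apply: eq_integral => c _; apply: eq_integral => xi _; rewrite coord_loss_update.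
Qed.

End bayes_risk.

Theorem lemma2 (R : realType) (n p : nat) (X : 'M[R]_(n, p)) (sigma q : R)
    (G : probability (n.-tuple (measurableTypeR R)) R)
    (Pi : probability (p.-tuple (measurableTypeR R)) R) (Pij : 'I_p -> probability (measurableTypeR R) R) :
  0 < sigma -> 1 <= q ->
  std_gaussian G ->
  is_product_prob Pi Pij ->
  (\sum_(j < p) minimax_bayes1 X sigma q G j (Pij j)
     <= minimax_bayes X sigma q G Pi)%E.
Proof.
move=> _ _ _ Pi_prod; apply: le_ereal_inf_tmp => _ [T mT <-].
rewrite bayes_risk_sum //; apply: lee_sum => j _.
exact: minimax_bayes1_le_coord_risk.
Qed.
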